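(* Let $N\ge 2$ agents have true utility functions $F_1,\dots,F_N:\mathbb{R}\to\mathbb{R}$. Let $\boldsymbol{u}^*=(u_1^*,\dots,u_N^* )$ be the optimal solution, assumed unique, of $\max_{\boldsymbol u}\sum_{i}F_i(u_i)$ subject to $\sum_i u_i=0$, and for each $i$ let $\boldsymbol{u}^{(i)}=(u^{(i)}_j)_{j\neq i}$ be the unique optimal solution of $\max\sum_{j\neq i}F_j(u_j)$ subject to $\sum_{j\ne i}u_j=0$. Let $H_i:=\sum_{j\neq i}F_j(u^{(i)}_j)$, $H_{max}:=\max_i H_i$ and $F_{total}:=\sum_j F_j(u_j^* )$. If $F_{total}>0$, $H_i>0$ for all $i$, and the Market Power Balance condition $(N-1)H_{max}\le\sum_i H_i$ holds, then there exist real numbers $\underline c\le\bar c$ such that for every constant $c\in[\underline c,\bar c]$ the Scaled VCG mechanism with scaling factor $c$ satisfies incentive compatibility, efficiency, budget balance and individual rationality simultaneously.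
   Context: Setting: an operator (ISO) wants to choose energy amounts $u_i$ ($u_i\le 0$ for producers, $u_i\ge0$ for consumers) maximizing the social welfare $\sum_i F_i(u_i)$ subject to $\sum_i u_i=0$, but does not know the $F_i$. Each agent $i$ bids a function $\hat F_i$ (not necessarily equal to $F_i$); write $\hat F=(\hat F_1,\dots,\hat F_N)$. The ISO computes $\boldsymbol u^*(\hat F)$ maximizing $\sum_i\hat F_i(u_i)$ subject to $\sum_iu_i=0$, assigns $u_i^*(\hat F)$ to agent $i$, and for each $i$ computes $\boldsymbol u^{(i)}(\hat F)$ maximizing $\sum_{j\ne i}\hat F_j(u_j)$ subject to $\sum_{j\ne i}u_j=0$. In the Scaled VCG (SVCG) mechanism with constant scaling factor $c$ (fixed in advance, independent of the bids), agent $i$ pays $p_i(\hat F)=c\sum_{j\ne i}\hat F_j(u_j^{(i)}(\hat F))-\sum_{j\neq i}\hat F_j(u_j^*(\hat F))$. Agent $i$'s net utility is $F_i(u_i^*(\hat F))-p_i(\hat F)$. Incentive compatibility (IC): for every $i$ and every bids of the other agents, bidding $\hat F_i=F_i$ maximizes agent $i$'s net utility. Efficiency (EF): under truthful bids the allocation maximizes $\sum_iF_i(u_i)$ subject to $\sum_iu_i=0$. Budget balance (BB): under truthful bids $\sum_i p_i\ge 0$. Individual rationality (IR): under truthful bids $F_i(u_i^* )-p_i\ge0$ for every $i$. *)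

From mathcomp Require Import all_boot all_order all_algebra.
From mathcomp Require Import reals.
Set Implicit Arguments. Unset Strict Implicit. Unset Printing Implicit Defensive.
Import Order.TTheory GRing.Theory Num.Theory.
Local Open Scope ring_scope.

Section SVCG.
Variables (R : realType) (N : nat).

Definition profile := 'I_N -> R -> R.
Definition alloc := 'I_N -> R.

Definition welfare (Fh : profile) (u : alloc) : R := \sum_(j < N) Fh j (u j).
Definition feasible (u : alloc) : Prop := \sum_(j < N) u j = 0.
Definition optimal (Fh : profile) (u : alloc) : Prop :=
  feasible u /\ forall u', feasible u' -> welfare Fh u' <= welfare Fh u.

(* Problem with agent i removed (the value u i is irrelevant). *)
Definition welfare_wo (Fh : profile) (i : 'I_N) (u : alloc) : R :=
  \sum_(j < N | j != i) Fh j (u j).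
Definition feasible_wo (i : 'I_N) (u : alloc) : Prop :=
  \sum_(j < N | j != i) u j = 0.
Definition optimal_wo (Fh : profile) (i : 'I_N) (u : alloc) : Prop :=
  feasible_wo i u /\
  forall u', feasible_wo i u' -> welfare_wo Fh i u' <= welfare_wo Fh i u.

(* SVCG payment of agent i: w = u*(Fh), v = u^(i)(Fh). *)
Definition svcg_pay (c : R) (Fh : profile) (w v : alloc) (i : 'I_N) : R :=
  c * welfare_wo Fh i v - welfare_wo Fh i w.

Definition replace_bid (Fh : profile) (i : 'I_N) (g : R -> R) : profile :=
  fun j => if j == i then g else Fh j.

(* Incentive compatibility: for every agent i, every bid profile Fh
   (i.e. every bids of the others and every bid Fh i of agent i), and
   whatever optimal solutions the ISO computes, bidding truthfully gives
   agent i a net utility at least that of bidding Fh i. *)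
Definition svcg_IC (c : R) (F : profile) : Prop :=
  forall (i : 'I_N) (Fh : profile) (w w' v v' : alloc),
    optimal (replace_bid Fh i (F i)) w ->
    optimal_wo (replace_bid Fh i (F i)) i v ->
    optimal Fh w' ->
    optimal_wo Fh i v' ->
    F i (w' i) - svcg_pay c Fh w' v' i
      <= F i (w i) - svcg_pay c (replace_bid Fh i (F i)) w v i.

Definition svcg_EF (c : R) (F : profile) : Prop :=
  forall w : alloc, optimal F w ->
    feasible w /\ forall u, feasible u -> welfare F u <= welfare F w.

Definition svcg_BB (c : R) (F : profile) : Prop :=
  forall (w : alloc) (v : 'I_N -> alloc),
    optimal F w -> (forall i, optimal_wo F i (v i)) ->
    0 <= \sum_(i < N) svcg_pay c F w (v i) i.

Definition svcg_IR (c : R) (F : profile) : Prop :=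
  forall (w : alloc) (v : 'I_N -> alloc),
    optimal F w -> (forall i, optimal_wo F i (v i)) ->
    forall i, 0 <= F i (w i) - svcg_pay c F w (v i) i.

End SVCG.

(* Under truthful bids agent i's net utility is F_total - c H_i, and the sum of
   the payments is c (H_1 + ... + H_N) - (N - 1) F_total.  Hence individual
   rationality means c <= F_total / H_max and budget balance means
   c >= (N - 1) F_total / (H_1 + ... + H_N); the Market Power Balance condition
   says exactly that this interval is nonempty.  Incentive compatibility holds
   for every c, because the scaled term c H_i(F^) does not depend on agent i's
   own bid, so agent i maximises F_i(u_i) + sum_(j != i) F^_j(u_j), which
   truthful bidding does.  Only optimal values enter these computations. *)

From mathcomp Require Import all_boot all_order all_algebra.
From mathcomp Require Import reals.
From mathcomp Require Import lra.
Set Implicit Arguments. Unset Strict Implicit. Unset Printing Implicit Defensive.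
Import Order.TTheory GRing.Theory Num.Theory.
Local Open Scope ring_scope.

Section SVCGProperties.
Variables (R : realType) (N : nat).
Implicit Types (c : R) (F Fh : profile R N) (u w v : alloc R N) (i : 'I_N).

Lemma welfareD1 Fh u i : welfare Fh u = Fh i (u i) + welfare_wo Fh i u.
Proof. by rewrite /welfare /welfare_wo (bigD1 i). Qed.

Lemma optimal_welfare_eq Fh w w' :
  optimal Fh w -> optimal Fh w' -> welfare Fh w = welfare Fh w'.
Proof. by move=> [fw ow] [fw' ow']; apply/le_anti; rewrite ow // ow'. Qed.

Lemma optimal_wo_welfare_eq Fh i v v' :
  optimal_wo Fh i v -> optimal_wo Fh i v' -> welfare_wo Fh i v = welfare_wo Fh i v'.
Proof. by move=> [fv ov] [fv' ov']; apply/le_anti; rewrite ov // ov'. Qed.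

Lemma welfare_wo_replace_bid Fh i g u :
  welfare_wo (replace_bid Fh i g) i u = welfare_wo Fh i u.
Proof. by apply: eq_bigr => j /negbTE ji; rewrite /replace_bid ji. Qed.

Lemma optimal_wo_replace_bid Fh i g v :
  optimal_wo (replace_bid Fh i g) i v -> optimal_wo Fh i v.
Proof.
by move=> [fv ov]; split=> // u fu; rewrite -!(welfare_wo_replace_bid Fh i g) ov.
Qed.

Lemma svcg_IC_all c F : svcg_IC c F.
Proof.
move=> i Fh w w' v v' ow ov ow' ov'; rewrite /svcg_pay.
set Ftruth := replace_bid Fh i (F i).
have -> : welfare_wo Fh i v' = welfare_wo Ftruth i v.
  by rewrite welfare_wo_replace_bid (optimal_wo_welfare_eq ov' (optimal_wo_replace_bid ov)).
have welfare_Ftruth u : welfare Ftruth u = F i (u i) + welfare_wo Fh i u.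
  by rewrite (welfareD1 _ _ i) welfare_wo_replace_bid /Ftruth /replace_bid eqxx.
have : welfare Ftruth w' <= welfare Ftruth w by case: ow => _ ->; case: ow'.
rewrite !welfare_Ftruth !welfare_wo_replace_bid; lra.
Qed.

Lemma svcg_EF_all c F : svcg_EF c F.
Proof. by move=> w []. Qed.

Lemma svcg_net_utility c F w v i :
  F i (w i) - svcg_pay c F w v i = welfare F w - c * welfare_wo F i v.
Proof. by rewrite /svcg_pay (welfareD1 F w i); lra. Qed.

Lemma sum_svcg_pay c F w (v : 'I_N -> alloc R N) : (0 < N)%N ->
  \sum_i svcg_pay c F w (v i) i =
    c * \sum_i welfare_wo F i (v i) - (N.-1)%:R * welfare F w.
Proof.
move=> N_gt0; have welfare_wo_w i : welfare_wo F i w = welfare F w - F i (w i).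
  by rewrite (welfareD1 F w i) addrC addKr.
rewrite /svcg_pay sumrB -mulr_sumr (eq_bigr _ (fun i _ => welfare_wo_w i)).
rewrite sumrB sumr_const card_ord -/(welfare F w).
by rewrite -[in X in _ *+ X](prednK N_gt0) mulrSr addrK mulr_natl.
Qed.

Lemma svcg_BB_of_le c F w0 (v0 : 'I_N -> alloc R N) : (0 < N)%N ->
  optimal F w0 -> (forall i, optimal_wo F i (v0 i)) ->
  (N.-1)%:R * welfare F w0 <= c * \sum_i welfare_wo F i (v0 i) ->
  svcg_BB c F.
Proof.
move=> N_gt0 ow0 ov0 le_c w v ow ov; rewrite sum_svcg_pay // subr_ge0.
rewrite (optimal_welfare_eq ow ow0).
by under eq_bigr => i _ do rewrite (optimal_wo_welfare_eq (ov i) (ov0 i)).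
Qed.

Lemma svcg_IR_of_le c F w0 (v0 : 'I_N -> alloc R N) :
  optimal F w0 -> (forall i, optimal_wo F i (v0 i)) ->
  (forall i, c * welfare_wo F i (v0 i) <= welfare F w0) ->
  svcg_IR c F.
Proof.
move=> ow0 ov0 le_c w v ow ov i; rewrite svcg_net_utility subr_ge0.
by rewrite (optimal_welfare_eq ow ow0) (optimal_wo_welfare_eq (ov i) (ov0 i)).
Qed.

End SVCGProperties.

Theorem theorem1 (R : realType) (N : nat) (HN : (2 <= N)%N)
  (F : 'I_N -> R -> R) (ustar : 'I_N -> R) (uI : 'I_N -> 'I_N -> R)
  (Hustar : optimal F ustar)
  (Hustar_uniq : forall u, optimal F u -> u = ustar)
  (HuI : forall i, optimal_wo F i (uI i))
  (HuI_uniq : forall i u, optimal_wo F i u ->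
                forall j, j != i -> u j = uI i j) :
  let H := fun i : 'I_N => \sum_(j < N | j != i) F j (uI i j) in
  let Hmax := \big[Num.max/H (@Ordinal N 0 (ltnW HN))]_(i < N) H i in
  let Ftotal := \sum_(j < N) F j (ustar j) in
  0 < Ftotal ->
  (forall i, 0 < H i) ->
  (N.-1)%:R * Hmax <= \sum_(i < N) H i ->
  exists clow chigh : R, clow <= chigh /\
    forall c : R, clow <= c <= chigh ->
      [/\ svcg_IC c F, svcg_EF c F, svcg_BB c F & svcg_IR c F].
Proof.
move=> H Hmax Ft Ft_gt0 H_gt0 MPB.
set i0 := Ordinal (ltnW HN); set S := \sum_(i < N) H i.
have H_le_Hmax i : H i <= Hmax by apply: le_bigmax.
have Hmax_gt0 : 0 < Hmax by apply: lt_le_trans (H_le_Hmax i0).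
have S_gt0 : 0 < S by rewrite /S (bigD1 i0) //= ltr_pwDl ?sumr_ge0 // => i _; apply/ltW.
exists ((N.-1)%:R * Ft / S), (Ft / Hmax); split.
  rewrite ler_pdivrMr // mulrAC ler_pdivlMr //.
  by rewrite [_ * Ft]mulrC -mulrA ler_wpM2l // ltW.
move=> c /andP[clow_le_c c_le_chigh].
have c_ge0 : 0 <= c by apply: le_trans clow_le_c; rewrite !mulr_ge0 ?invr_ge0 // ltW.
split; [exact: svcg_IC_all | exact: svcg_EF_all | |].
- apply: (svcg_BB_of_le (ltnW HN) Hustar HuI).
  by rewrite -ler_pdivrMr.
- apply: (svcg_IR_of_le Hustar HuI) => i.
  by apply: le_trans (ler_wpM2l c_ge0 (H_le_Hmax i)) _; rewrite -ler_pdivlMr.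
Qed.
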